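(* Let $H=\sum_{\mathbf{j}\in V}h_{\mathbf{j}}$ be a Hamiltonian with frustration graph $G$, let $K_s$ be a simplicial clique in $G$, and for $\mathbf{j}\in K_s$ let $K_{\mathbf{j}}=\Gamma[\mathbf{j}]\setminus(K_s\setminus\{\mathbf{j}\})$, so that $\Gamma[\mathbf{j}]=K_s\cup K_{\mathbf{j}}$. Then for every integer $k\ge1$, \[ Q^{(k)}_G=Q^{(k)}_{G\setminus K_s}+\sum_{\mathbf{j}\in K_s}Q^{(k-1)}_{G\setminus K_{\mathbf{j}}}\,h_{\mathbf{j}} . \]
   Context: Setting: $V$ a finite set of distinct $n$-qubit Pauli strings, $H=\sum_{\mathbf{j}\in V}h_{\mathbf{j}}$ with $h_{\mathbf{j}}=b_{\mathbf{j}}\sigma^{\mathbf{j}}$, $b_{\mathbf{j}}\in\mathbb{R}\setminus\{0\}$; frustration graph $G$: edge iff terms anticommute. $\Gamma[\mathbf{j}]$ is the closed neighbourhood of $\mathbf{j}$. Simplicial clique: clique $K_s$ with $\Gamma(\mathbf{j})\setminus K_s$ a clique for every $\mathbf{j}\in K_s$. For an induced subgraph $G'$ of $G$ and $k\ge0$, the independent set charge is $Q^{(k)}_{G'}=\sum_{S}h_S$, summed over independent sets $S$ of $G'$ of size $k$, where $h_S=\prod_{\mathbf{j}\in S}h_{\mathbf{j}}$ (so $Q^{(0)}_{G'}=I$, and $Q^{(k)}_{G'}=0$ if $G'$ has no independent set of size $k$). $G\setminus U$ denotes the subgraph induced by $V\setminus U$. *)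

From HB Require Import structures.
From mathcomp Require Import all_boot all_order all_algebra.
From mathcomp Require Import reals.
From mathcomp Require Import complex.
Set Implicit Arguments. Unset Strict Implicit. Unset Printing Implicit Defensive.
Import Order.TTheory GRing.Theory Num.Theory.
Local Open Scope ring_scope.

(* An n-qubit Pauli string: each qubit carries 0 = I, 1 = X, 2 = Y, 3 = Z. *)
Definition pauli_string (n : nat) := {ffun 'I_n -> 'I_4}.

Section Pauli.
Variable R : realType.
Local Notation C := (complex R).

(* Single-qubit Pauli matrices, entry (x, y) with x, y in {0,1} (false = |0>). *)
Definition pauli1 (p : 'I_4) (x y : bool) : C :=
  match val p with
  | 0 => if x == y then 1 else 0
  | 1 => if x == y then 0 else 1
  | 2 => if x == y then 0 else if y then - 'i%C else 'i%C
  | _ => if x == y then (if x then -1 else 1) else 0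
  end.

Definition qbit (n : nat) (a : 'I_(2 ^ n)) (i : 'I_n) : bool := odd (a %/ 2 ^ i).

(* sigma^j = tensor product of the single-qubit Paulis, as a 2^n x 2^n matrix. *)
Definition sigma (n : nat) (s : pauli_string n) : 'M[C]_(2 ^ n) :=
  \matrix_(a, b) \prod_(i < n) pauli1 (s i) (qbit a i) (qbit b i).

Variable n : nat.
Variable b : pauli_string n -> R.

Definition hterm (j : pauli_string n) : 'M[C]_(2 ^ n) := (b j)%:C%C *: sigma j.

Definition frust (j k : pauli_string n) : bool :=
  (j != k) && (hterm j *m hterm k == - (hterm k *m hterm j)).

Definition nbhd (V : {set pauli_string n}) j := [set k in V | frust j k].
Definition cnbhd (V : {set pauli_string n}) j := j |: nbhd V j.

Definition is_clique (K : {set pauli_string n}) : bool :=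
  [forall j in K, forall k in K, (j != k) ==> frust j k].

Definition is_indep (S : {set pauli_string n}) : bool :=
  [forall j in S, forall k in S, ~~ frust j k].

Definition simplicial_clique (V Ks : {set pauli_string n}) : bool :=
  [&& Ks \subset V, is_clique Ks &
      [forall j in Ks, is_clique (nbhd V j :\: Ks)]].

(* h_S = product of the h_j, j in S (matrix product, in enumeration order;
   the factors pairwise commute when S is independent). *)
Definition hprod (S : {set pauli_string n}) : 'M[C]_(2 ^ n) :=
  \big[mulmx/1%:M]_(j in S) hterm j.

Definition Qcharge (W : {set pauli_string n}) (k : nat) : 'M[C]_(2 ^ n) :=
  \sum_(S : {set pauli_string n} | [&& S \subset W, is_indep S & #|S| == k])
     hprod S.

End Pauli.

From HB Require Import structures.
From mathcomp Require Import all_boot all_order all_algebra.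
From mathcomp Require Import reals complex ring.
Set Implicit Arguments. Unset Strict Implicit. Unset Printing Implicit Defensive.
Import Order.TTheory GRing.Theory Num.Theory.
Local Open Scope ring_scope.

(* Split the independent k-sets S of G according to S :&: K_s, which has at most
   one element because K_s is a clique.  The sets avoiding K_s make up
   Q^(k)_{G\K_s}; a set containing j in K_s is j |: T with T an independent
   (k-1)-set avoiding Gamma[j], and h_S = h_T h_j because h_j commutes with the
   terms of T.  Hence
     Q^(k)_G = Q^(k)_{G\K_s} + sum_j Q^(k-1)_{G\Gamma[j]} h_j.
   Splitting G\K_j, the union of G\Gamma[j] and K_s\{j}, in the same way
   along the clique K_s\{j} shows that Q^(k-1)_{G\K_j} h_j exceeds
   Q^(k-1)_{G\Gamma[j]} h_j by the sum over j' <> j in K_s of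
   Q^(k-2)_{G\(Gamma[j] U Gamma[j'])} h_j' h_j, and these excess terms cancel in
   pairs (j, j'), (j', j) because adjacent terms anticommute.
   The argument works for any family in a ring whose commutation relations are
   given by a graph (nonadjacent elements commute, adjacent ones anticommute);
   Pauli terms form such a family for their frustration graph. *)

Lemma prodr_rem_comm (R : pzSemiRingType) (I : eqType) (s : seq I) (P : pred I)
    (F : I -> R) x :
  uniq s -> x \in s -> P x ->
  (forall y, y \in s -> P y -> GRing.comm (F y) (F x)) ->
  \prod_(y <- s | P y) F y = (\prod_(y <- s | P y && (y != x)) F y) * F x.
Proof.
elim: s => [//|y s IHs] /= /andP[ys us]; rewrite inE.
case: eqVneq => [-> _ Py commFy | xy /= xs Px commFx].
  rewrite !big_cons Py eqxx andbF /=.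
  have -> : \prod_(z <- s | P z && (z != y)) F z = \prod_(z <- s | P z) F z.
    rewrite big_seq_cond [RHS]big_seq_cond; apply: eq_bigl => z.
    case: (boolP (z \in s)) => //= zs.
    by rewrite (_ : z != y) ?andbT //; apply: contraNneq ys => <-.
  rewrite big_seq_cond; apply: commr_prod => z /andP[zs Pz].
  by apply/esym/commFy => //; rewrite inE zs orbT.
rewrite !big_cons eq_sym xy andbT IHs // => [|z zs].
  by case: (P y); rewrite ?mulrA.
by apply: commFx; rewrite inE zs orbT.
Qed.

Lemma sum_antisym_eq0 (V : zmodType) (I : Type) (s : seq I) (F : I -> I -> V) :
  (forall i, F i i = 0) -> (forall i j, F j i = - F i j) ->
  \sum_(i <- s) \sum_(j <- s) F i j = 0.
Proof.
move=> F_diag F_anti; elim: s => [|x s IHs]; first by rewrite big_nil.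
rewrite !big_cons F_diag add0r; under [X in _ + X]eq_bigr do rewrite big_cons.
by rewrite big_split /= IHs addr0 (eq_bigr _ (fun i _ => F_anti x i)) sumrN subrr.
Qed.

Lemma sum_setU1 (V : nmodType) (T : finType) x (P : pred {set T})
    (F : {set T} -> V) :
  \sum_(S | P S && (x \in S)) F S =
  \sum_(S | P (x |: S) && (x \notin S)) F (x |: S).
Proof.
rewrite (reindex_onto (fun S => x |: S) (fun S => S :\ x)) /=; last first.
  by move=> S /andP[_ xS]; rewrite setD1K.
apply: eq_bigl => S; rewrite setU11 andbT.
have [xS|xS] /= := boolP (x \in S); last by rewrite setU1K ?eqxx ?andbT.
by rewrite andbF; apply/negbTE/negP => /andP[_ /eqP eS]; rewrite -eS setD11 in xS.
Qed.

Lemma setDDr_sub (T : finType) (A B C D : {set T}) : C \subset D ->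
  A :\: (B :\: C) :\: D = A :\: (B :|: D).
Proof.
move=> /subsetP sCD; apply/setP => y; rewrite !inE.
have [yD|yD] /= := boolP (y \in D); first by rewrite orbT.
by rewrite (contraNN (sCD y) yD) orbF.
Qed.

Section IndependentSetCharge.
Variables (T : finType) (A : pzRingType) (h : T -> A) (adj : rel T).
Hypotheses (adj_sym : symmetric adj) (adj_irr : irreflexive adj).
Hypothesis commute_nonadj : forall x y, ~~ adj x y -> GRing.comm (h x) (h y).
Hypothesis anticommute_adj : forall x y, adj x y -> h x * h y = - (h y * h x).

Definition indep (S : {set T}) := [forall x in S, forall y in S, ~~ adj x y].

Definition clique (K : {set T}) :=
  [forall x in K, forall y in K, (x != y) ==> adj x y].

Definition closed_nbhd x := x |: [set y | adj x y].

Definition indep_in (W : {set T}) k (S : {set T}) :=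
  [&& S \subset W, indep S & #|S| == k].

Definition charge (W : {set T}) k : A :=
  \sum_(S | indep_in W k S) \prod_(x in S) h x.

Lemma indepP (S : {set T}) :
  reflect {in S &, forall x y, ~~ adj x y} (indep S).
Proof.
apply: (iffP forall_inP) => [iS x y xS yS | iS x xS].
  by have /forall_inP := iS x xS; apply.
by apply/forall_inP => y yS; apply: iS.
Qed.

Lemma cliqueP (K : {set T}) :
  reflect {in K &, forall x y, x != y -> adj x y} (clique K).
Proof.
apply: (iffP forall_inP) => [cK x y xK yK | cK x xK].
  by have /forall_inP/(_ y yK)/implyP := cK x xK.
by apply/forall_inP => y yK; apply/implyP; apply: cK.
Qed.

Lemma mem_closed_nbhd x y : (y \in closed_nbhd x) = (y == x) || adj x y.
Proof. by rewrite !inE. Qed.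

Lemma indep_setU1 x (S : {set T}) :
  [disjoint S & closed_nbhd x] && indep S = (x \notin S) && indep (x |: S).
Proof.
apply/andP/andP => [[dSx /indepP iS] | [xS /indepP iU]]; split.
- by apply/negP => xS; have := disjointFr dSx xS; rewrite mem_closed_nbhd eqxx.
- have nadj y : y \in S -> ~~ adj x y.
    by move=> yS; have := disjointFr dSx yS; rewrite mem_closed_nbhd => /norP[].
  apply/indepP => y z; rewrite !in_setU1.
  case/predU1P=> [->|yS] /predU1P[->|zS].
  + by rewrite adj_irr.
  + exact: nadj.
  + by rewrite adj_sym nadj.
  + exact: iS.
- rewrite -setI_eq0; apply/eqP/setP => y; rewrite !inE.
  have [yS|//] := boolP (y \in S).
  rewrite (negbTE (iU x y _ _)) ?setU11 ?setU1r // orbF.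
  by apply: contraNF xS => /eqP <-.
- by apply/indepP => y z yS zS; rewrite iU ?setU1r.
Qed.

Lemma prod_setU1 x (S : {set T}) :
  x \notin S -> (forall y, y \in S -> GRing.comm (h y) (h x)) ->
  \prod_(y in x |: S) h y = (\prod_(y in S) h y) * h x.
Proof.
move=> xS commS.
rewrite (prodr_rem_comm (x := x)) ?index_enum_uniq ?mem_index_enum ?setU11 //.
  congr (_ * _); apply: eq_bigl => y; rewrite in_setU1.
  by case: eqVneq => [->|]; rewrite ?(negbTE xS) ?andbT.
by move=> y _; rewrite in_setU1 => /predU1P[->|/commS].
Qed.

Lemma charge_through (W : {set T}) x k : x \in W ->
  \sum_(S | indep_in W k.+1 S && (x \in S)) \prod_(y in S) h y =
  charge (W :\: closed_nbhd x) k * h x.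
Proof.
move=> xW; rewrite sum_setU1 /charge mulr_suml; apply: eq_big => S.
  rewrite /indep_in subsetD subUset sub1set xW cardsU1 /=.
  have := indep_setU1 x S; case: (x \in S); case: [disjoint _ & _];
    case: (indep S); case: (indep _); case: (S \subset W) => //= _;
    by rewrite ?andbF ?andbT ?add1n ?eqSS.
move=> /andP[/and3P[_ /indepP iU _] xS]; rewrite prod_setU1 // => y yS.
by apply/esym/commute_nonadj; rewrite iU ?setU11 ?setU1r.
Qed.

Lemma sum_meet_clique (V : nmodType) (K : {set T}) (P : pred {set T})
    (F : {set T} -> V) :
  clique K -> (forall S, P S -> indep S) ->
  \sum_(S | P S && ~~ [disjoint S & K]) F S =
  \sum_(x in K) \sum_(S | P S && (x \in S)) F S.
Proof.
move=> /cliqueP cK indepS.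
under [RHS]eq_bigr do rewrite big_mkcondr.
rewrite exchange_big [LHS]big_mkcondr; apply: eq_bigr => S /indepS /indepP iS.
rewrite -big_mkcondr (eq_bigl (mem (K :&: S))); last by move=> x; rewrite /= inE.
have : (#|K :&: S| <= 1)%N.
  apply/card_le1_eqP => x y /setIP[xK xS] /setIP[yK yS].
  by apply: contraTeq (iS x y xS yS); rewrite negbK eq_sym; apply: cK.
rewrite sumr_const -setI_eq0 -cards_eq0 setIC.
by case: #|_| => [|[|]] //= _; rewrite ?mulr0n ?mulr1n.
Qed.

Lemma charge0 (W : {set T}) : charge W 0 = 1.
Proof.
rewrite /charge (big_pred1 set0) ?big_set0 // => S.
rewrite /indep_in /= cards_eq0; case: eqVneq => [->|_]; last by rewrite !andbF.
by rewrite sub0set andbT; apply/indepP => x y; rewrite inE.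
Qed.

Lemma charge_clique_nbhd (W K : {set T}) k : K \subset W -> clique K ->
  charge W k.+1 =
  charge (W :\: K) k.+1 + \sum_(x in K) charge (W :\: closed_nbhd x) k * h x.
Proof.
move=> sKW cK; rewrite {1}/charge (bigID (fun S : {set T} => [disjoint S & K])) /=.
congr (_ + _).
  by apply: eq_bigl => S; rewrite /indep_in subsetD andbAC.
rewrite sum_meet_clique //; last by move=> S /and3P[].
by apply: eq_bigr => x xK; apply: charge_through (subsetP sKW x xK).
Qed.

Lemma closed_nbhd_clique (K : {set T}) x :
  clique K -> x \in K -> K \subset closed_nbhd x.
Proof.
move=> /cliqueP cK xK; apply/subsetP => y yK; rewrite mem_closed_nbhd.
by case: eqVneq => //= yx; apply: cK; rewrite // eq_sym.
Qed.

Lemma cliqueS (K' K : {set T}) : K' \subset K -> clique K -> clique K'.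
Proof.
move=> /subsetP sKK /cliqueP cK; apply/cliqueP => x y /sKK xK /sKK yK; exact: cK.
Qed.

Lemma charge_link (V K : {set T}) x k : K \subset V -> clique K -> x \in K ->
  charge (V :\: (closed_nbhd x :\: (K :\ x))) k.+1 =
  charge (V :\: closed_nbhd x) k.+1 +
  \sum_(y in K :\ x) charge (V :\: (closed_nbhd x :|: closed_nbhd y)) k * h y.
Proof.
move=> sKV cK xK.
have sKxN y : y \in K -> K :\ x \subset closed_nbhd y.
  by move=> yK; rewrite (subset_trans (subsetDl _ _)) ?closed_nbhd_clique.
have sKx : K :\ x \subset V :\: (closed_nbhd x :\: (K :\ x)).
  by apply/subsetP => y /setD1P[yx yK]; rewrite !inE yx yK (subsetP sKV y yK).
rewrite (charge_clique_nbhd k sKx (cliqueS (subsetDl K [set x]) cK)).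
rewrite setDDr_sub // (setUidPl (sKxN x xK)); congr (_ + _).
by apply: eq_bigr => y /setD1P[_ yK]; rewrite setDDr_sub ?sKxN.
Qed.

Lemma charge_clique_link (V K : {set T}) k : K \subset V -> clique K ->
  charge V k.+1 = charge (V :\: K) k.+1 +
    \sum_(x in K) charge (V :\: (closed_nbhd x :\: (K :\ x))) k * h x.
Proof.
move=> sKV cK; rewrite (charge_clique_nbhd k sKV cK); congr (_ + _).
case: k => [|k]; first by apply: eq_bigr => x _; rewrite !charge0.
pose cross x y := if adj x y
  then charge (V :\: (closed_nbhd x :|: closed_nbhd y)) k * (h y * h x) else 0.
have cross_link x : x \in K ->
    (\sum_(y in K :\ x) charge (V :\: (closed_nbhd x :|: closed_nbhd y)) k * h y) * h x =
    \sum_(y in K) cross x y.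
  move=> xK; rewrite mulr_suml /cross -big_mkcondr.
  apply: eq_big => [y|y _]; last by rewrite mulrA.
  rewrite in_setD1 andbC; have [yK|//] /= := boolP (y \in K).
  by case: eqVneq => [->|yx]; rewrite ?adj_irr // (elimT (cliqueP K) cK) // eq_sym.
under [RHS]eq_bigr => x xK do rewrite charge_link // mulrDl cross_link //.
rewrite big_split /= -[LHS]addr0; congr (_ + _).
rewrite -big_enum; under eq_bigr do rewrite -big_enum.
symmetry; apply: sum_antisym_eq0 => [x|x y]; rewrite /cross ?adj_irr // adj_sym.
case: ifP => [axy|_]; last by rewrite oppr0.
by rewrite setUC anticommute_adj // mulrN.
Qed.

End IndependentSetCharge.

Lemma binary_digits_inj (n a a' : nat) : (a < 2 ^ n)%N -> (a' < 2 ^ n)%N ->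
  (forall i, (i < n)%N -> odd (a %/ 2 ^ i) = odd (a' %/ 2 ^ i)) -> a = a'.
Proof.
elim: n a a' => [|n IHn] a a'.
  by rewrite expn0 !ltnS !leqn0 => /eqP-> /eqP->.
move=> lt_a lt_a' eq_digits.
have half_lt x : (x < 2 ^ n.+1)%N -> (x %/ 2 < 2 ^ n)%N.
  by rewrite ltn_divLR // -expnSr.
have eq_half : (a %/ 2 = a' %/ 2)%N.
  by apply: IHn => [||i lt_in]; rewrite ?half_lt // -!divnMA -expnS eq_digits.
rewrite (div.divn_eq a 2) (div.divn_eq a' 2) eq_half !modn2.
by have := eq_digits 0%N isT; rewrite expn0 !divn1 => ->.
Qed.

Definition qbits n (a : 'I_(2 ^ n)) : {ffun 'I_n -> bool} := [ffun i => qbit a i].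

Lemma qbits_bij n : bijective (@qbits n).
Proof.
apply: inj_card_bij; last by rewrite card_ffun card_bool !card_ord.
move=> a a' /ffunP eq_bits.
apply/val_inj/(binary_digits_inj (ltn_ord a) (ltn_ord a')).
by move=> i lt_in; have := eq_bits (Ordinal lt_in); rewrite !ffunE.
Qed.

Section PauliCommutation.
Variable R : realType.
Local Notation C := (complex R).

Lemma mulmx_tensor n (F G : 'I_n -> bool -> bool -> C) :
  (\matrix_(a, c) \prod_(i < n) F i (qbit a i) (qbit c i) : 'M[C]_(2 ^ n)) *m
  (\matrix_(a, c) \prod_(i < n) G i (qbit a i) (qbit c i)) =
  \matrix_(a, c) \prod_(i < n) \sum_(x : bool) F i (qbit a i) x * G i x (qbit c i).
Proof.
apply/matrixP => a c; rewrite !mxE bigA_distr_bigA /=.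
rewrite (reindex (@qbits n)) /=; last first.
  by case: (qbits_bij n) => g qg gq; exists g => x _; [apply: qg | apply: gq].
apply: eq_bigr => y _; rewrite !mxE -big_split /=.
by apply: eq_bigr => i _; rewrite ffunE.
Qed.

Definition pauli1_sign (p q : 'I_4) : C :=
  if (val p == 0)%N || (val q == 0)%N || (p == q) then 1 else -1.

Lemma pauli1_commute (p q : 'I_4) (a c : bool) :
  \sum_(x : bool) pauli1 R p a x * pauli1 R q x c =
  pauli1_sign p q * \sum_(x : bool) pauli1 R q a x * pauli1 R p x c.
Proof.
rewrite !big_bool /pauli1_sign.
by case: p => [[|[|[|[|p]]]] ?] //; case: q => [[|[|[|[|q]]]] ?] //=;
  case: a; case: c; rewrite /pauli1 /=; ring.
Qed.

Definition pauli_sign n (s t : pauli_string n) : C :=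
  \prod_(i < n) pauli1_sign (s i) (t i).

Lemma pauli_sign_pm n (s t : pauli_string n) :
  pauli_sign s t = 1 \/ pauli_sign s t = -1.
Proof.
apply: (big_ind (fun x : C => x = 1 \/ x = -1)); first by left.
  by move=> x y [->|->] [->|->]; rewrite ?mulr1 ?mulrN1 ?opprK; auto.
by move=> i _; rewrite /pauli1_sign; case: ifP; auto.
Qed.

Lemma sigma_commute n (s t : pauli_string n) :
  sigma R s *m sigma R t = pauli_sign s t *: (sigma R t *m sigma R s).
Proof.
rewrite /sigma (mulmx_tensor (fun i => pauli1 R (s i)) (fun i => pauli1 R (t i))).
rewrite (mulmx_tensor (fun i => pauli1 R (t i)) (fun i => pauli1 R (s i))).
apply/matrixP => a c; rewrite !mxE -big_split /=.
by apply: eq_bigr => i _; rewrite pauli1_commute.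
Qed.

Variables (n : nat) (b : pauli_string n -> R).
Local Notation h := (hterm b).

Lemma hterm_commute_or_anticommute (j k : pauli_string n) :
  h j *m h k = h k *m h j \/ h j *m h k = - (h k *m h j).
Proof.
rewrite /hterm -!scalemxAl -!scalemxAr !scalerA (mulrC (b k)%:C%C).
rewrite sigma_commute.
by case: (pauli_sign_pm j k) => ->; rewrite ?scale1r ?scaleN1r ?scalerN; auto.
Qed.

Lemma frust_sym : symmetric (frust b).
Proof.
move=> j k; apply/andP/andP => -[njk /eqP anti]; split; rewrite 1?eq_sym //;
  by apply/eqP; rewrite anti opprK.
Qed.

Lemma frust_irr : irreflexive (frust b).
Proof. by move=> j; rewrite /frust eqxx. Qed.

Lemma commute_nonfrust j k : ~~ frust b j k -> GRing.comm (h j) (h k).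
Proof.
have [-> _|njk /negP nfr] := eqVneq j k; first exact: commr_refl.
case: (hterm_commute_or_anticommute j k) => [//|anti].
by case: nfr; apply/andP; split; last exact/eqP.
Qed.

Lemma anticommute_frust j k : frust b j k -> h j * h k = - (h k * h j).
Proof. by case/andP=> _ /eqP. Qed.

Lemma setD_cnbhd (V C : {set pauli_string n}) j :
  V :\: (cnbhd b V j :\: C) = V :\: (closed_nbhd (frust b) j :\: C).
Proof. by apply/setP => y; rewrite !inE; case: (y \in V); rewrite ?andbF ?andbT. Qed.

End PauliCommutation.

Unset Implicit Arguments.

Theorem lemma18 (R : realType) (n : nat) (V : {set pauli_string n})
  (b : pauli_string n -> R)
  (hb : forall j, j \in V -> b j != 0)
  (Ks : {set pauli_string n})
  (hKs : simplicial_clique b V Ks)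
  (k : nat) (hk : (1 <= k)%N) :
  Qcharge b V k =
    Qcharge b (V :\: Ks) k +
    \sum_(j in Ks)
      Qcharge b (V :\: (cnbhd b V j :\: (Ks :\ j))) k.-1 *m hterm b j.
Proof.
case/and3P: hKs => sKV cK _; case: k hk => // k _.
have Q_charge W l : Qcharge b W l = charge (hterm b) (frust b) W l by [].
rewrite !Q_charge (charge_clique_link (frust_sym b) (frust_irr b)
  (@commute_nonfrust R n b) (@anticommute_frust R n b) k sKV cK).
by congr (_ + _); apply: eq_bigr => j _; rewrite Q_charge setD_cnbhd.
Qed.
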